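(* Let $k_1 \le k$ be positive integers and let $d \ge 2$ be an integer. Let $\delta = \frac{97}{420}$ and $\phi = 1.86 - \frac{1}{2100}$. Let $\beta(k) = 0$ for $k = 0, \dots, 8$ and $\beta(k) = \frac{1}{3} - \delta$ for $k \ge 9$. Then $$-(k-1)\delta + \sum_{j=1}^{k-1}\left(\frac{2}{d+j} - \frac{1}{d}\right) + H_{k+1} \le \phi - \beta(k).$$
   Context: $H_n = \sum_{i=1}^n \frac{1}{i}$ denotes the $n$-th harmonic number (with $H_0 = 0$). *)

From mathcomp Require Import all_boot all_order all_algebra.
Set Implicit Arguments. Unset Strict Implicit. Unset Printing Implicit Defensive.
Import Order.TTheory GRing.Theory Num.Theory.
Local Open Scope ring_scope.

Definition harmonic (R : realFieldType) (n : nat) : R :=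
  \sum_(1 <= i < n.+1) (i%:R)^-1.

Definition delta (R : realFieldType) : R := 97%:R / 420%:R.

Definition phi (R : realFieldType) : R := 186%:R / 100%:R - 1 / 2100%:R.

Definition beta (R : realFieldType) (k : nat) : R :=
  if (k <= 8)%N then 0 else 1 / 3%:R - delta R.

From mathcomp Require Import all_boot all_order all_algebra.
From mathcomp Require Import ring lra zify.
Import Order.TTheory GRing.Theory Num.Theory.
Local Open Scope ring_scope.

(* As a function of d, the sum over j < k of 2/(d+j) - 1/d grows by
   (k-1)(k-d) / (d(d+1)(d+k)) from d to d+1, so it is largest at d = k.
   Along the diagonal d = k the left-hand side changes by
   1/((k+1)(2k+1)) + 1/(k+2) - delta < 0 once k >= 4, so it suffices to
   evaluate it for k <= 4 (with equality at k = d = 4) and at k = 9. *)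

Section Bound.
Variable R : realFieldType.

Definition excess_sum (k d : nat) : R :=
  \sum_(1 <= j < k) (2%:R / (d + j)%:R - 1 / d%:R).

Lemma excess_sumSr k d : (0 < d)%N ->
  excess_sum k.+1 d.+1 = excess_sum k.+1 d
    + k%:R * (k.+1%:R - d%:R) / (d%:R * d.+1%:R * (d + k.+1)%:R).
Proof.
move=> d0; elim: k => [|k IH].
  by rewrite /excess_sum !big_geq // !mul0r addr0.
rewrite /excess_sum big_nat_recr //= [X in _ = X + _]big_nat_recr //=.
rewrite -!/(excess_sum _ _) IH !(addSn, addnS) -!natr1 !natrD.
have x0 : (0 : R) < d%:R by rewrite ltr0n.
have y0 : (0 : R) <= k%:R by rewrite ler0n.
by field; apply/and4P; split; apply: lt0r_neq0; lra.
Qed.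

Lemma excess_sum_nondecr k d : (0 < d)%N -> (d < k)%N ->
  excess_sum k d <= excess_sum k d.+1.
Proof.
case: k => // k d0 dk; rewrite excess_sumSr // lerDl.
apply: divr_ge0; last by rewrite !mulr_ge0.
by rewrite mulr_ge0 // subr_ge0 ler_nat ltnW.
Qed.

Lemma excess_sum_nonincr k d : (k <= d)%N -> excess_sum k d.+1 <= excess_sum k d.
Proof.
case: k => [_|k kd]; first by rewrite /excess_sum !big_geq.
rewrite excess_sumSr ?(leq_trans _ kd) // gerDl.
apply: mulr_le0_ge0; last by rewrite invr_ge0 !mulr_ge0.
by rewrite mulr_ge0_le0 // subr_le0 ler_nat.
Qed.

Lemma excess_sum_le_diag k d : (0 < d)%N -> excess_sum k d <= excess_sum k k.
Proof.
move=> d0; have [dk|kd] := leqP d k.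
- pose D := [pred n | 0 < n <= k]%N.
  have convex : {in D &, forall i j m, (i < m < j)%N -> m \in D}.
    by move=> i j; rewrite !inE => ? ? m ?; rewrite inE; lia.
  have step : {in D, forall n, n.+1 \in D -> excess_sum k n <= excess_sum k n.+1}.
    by move=> n; rewrite !inE => ? ?; apply: excess_sum_nondecr; lia.
  have Dd : d \in D by rewrite inE d0.
  have Dk : k \in D by rewrite inE leqnn (leq_trans d0 dk).
  exact: Order.NatMonotonyTheory.nondecn_inP convex step _ _ Dd Dk dk.
- pose D := [pred n | k <= n]%N.
  have convex : {in D &, forall i j m, (i < m < j)%N -> m \in D}.
    by move=> i j; rewrite !inE => ? ? m ?; rewrite inE; lia.
  have step : {in D, forall n, n.+1 \in D -> excess_sum k n.+1 <= excess_sum k n}.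
    by move=> n; rewrite inE => kn _; exact: excess_sum_nonincr kn.
  have Dk : k \in D by rewrite inE.
  have Dd : d \in D by rewrite inE ltnW.
  exact: Order.NatMonotonyTheory.nonincn_inP convex step _ _ Dd Dk (ltnW kd).
Qed.

Lemma excess_sum_diagS k : (0 < k)%N ->
  excess_sum k.+1 k.+1 = excess_sum k k + (k.+1%:R * k.*2.+1%:R)^-1.
Proof.
move=> k0; rewrite excess_sumSr // /excess_sum big_nat_recr //= -!/(excess_sum _ _).
rewrite -addnn -!natr1 !natrD.
have x0 : (0 : R) < k%:R by rewrite ltr0n.
by field; apply/and4P; split; apply: lt0r_neq0; lra.
Qed.

Definition lhs (k d : nat) : R :=
  - ((k - 1)%:R * delta R) + excess_sum k d + harmonic R k.+1.

Lemma lhs_le_diag k d : (0 < d)%N -> lhs k d <= lhs k k.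
Proof. by move=> d0; rewrite lerD2r lerD2l excess_sum_le_diag. Qed.

Lemma lhs_diag_nonincr k : (4 <= k)%N -> lhs k.+1 k.+1 <= lhs k k.
Proof.
move=> k4; rewrite /lhs excess_sum_diagS ?(leq_trans _ k4) //.
rewrite /harmonic big_nat_recr //= subSS subn0 natrB ?(leq_trans _ k4) //.
have : (k.+1%:R * k.*2.+1%:R)^-1 <= 45%:R^-1 :> R.
  by rewrite -natrM lef_pV2 ?posrE ?ltr0n ?muln_gt0 // ler_nat; nia.
have : k.+2%:R^-1 <= 6%:R^-1 :> R.
  by rewrite lef_pV2 ?posrE ?ltr0n // ler_nat; lia.
rewrite /delta; move: (k.+2%:R^-1 : R) ((k.+1%:R * k.*2.+1%:R)^-1 : R) => a b; lra.
Qed.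

Lemma lhs_diag_le m k : (4 <= m <= k)%N -> lhs k k <= lhs m m.
Proof.
case/andP=> m4 mk.
have shifted_nonincr n : lhs (n.+1 + m) (n.+1 + m) <= lhs (n + m) (n + m).
  by rewrite addSn lhs_diag_nonincr // (leq_trans m4) ?leq_addl.
have := Order.NatMonotonyTheory.nonincnP shifted_nonincr _ _ (leq0n (k - m)).
by rewrite subnK.
Qed.

Ltac eval_lhs := rewrite /lhs /excess_sum /harmonic /delta /phi unlock /=
  ?addnS ?addn0 ?subSS ?subn0 ?sub0n; lra.

Lemma lhs_diag_le_phi k : lhs k k <= phi R.
Proof.
have [k4|] := leqP 4 k; last by case: k => [|[|[|[|]]]] // _; eval_lhs.
have lhs44 : lhs 4 4 <= phi R by eval_lhs.
by apply: le_trans lhs44; apply: lhs_diag_le; rewrite k4.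
Qed.

Lemma lhs_diag_le_large k : (9 <= k)%N -> lhs k k <= phi R - (1 / 3%:R - delta R).
Proof.
move=> k9; have lhs99 : lhs 9 9 <= phi R - (1 / 3%:R - delta R) by eval_lhs.
by apply: le_trans lhs99; apply: lhs_diag_le; rewrite k9.
Qed.

End Bound.

Theorem mainTheorem3 (R : realFieldType) (k1 k d : nat)
  (hk1 : (0 < k1)%N) (hk1k : (k1 <= k)%N) (hd : (2 <= d)%N) :
  - ((k - 1)%:R * delta R)
    + \sum_(1 <= j < k) (2%:R / (d + j)%:R - 1 / d%:R)
    + harmonic R k.+1
  <= phi R - beta R k.
Proof.
change (lhs R k d <= phi R - beta R k).
apply: le_trans (lhs_le_diag R k d (ltnW hd)) _.
rewrite /beta; case: leqP => [_ | k9].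
- by rewrite subr0 lhs_diag_le_phi.
- exact: lhs_diag_le_large.
Qed.
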